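(* Let $T$ be a Grothendieck topology on a category $\mathscr{C}$, and let $\mathrm{Uni}(T)$ denote the singleton Grothendieck topology whose coverings are all universal $T$-locally split morphisms. Then: (a) $\mathrm{Uni}(T)\sim T$; in particular every Grothendieck topology is equivalent to a singleton one. (b) For Grothendieck topologies $T_1,T_2$ on $\mathscr{C}$: $T_1\prec T_2$ if and only if $\mathrm{Uni}(T_1)\subset\mathrm{Uni}(T_2)$, and $T_1\sim T_2$ if and only if $\mathrm{Uni}(T_1)=\mathrm{Uni}(T_2)$. (c) If $T$ is singleton, then $T\subset\mathrm{Uni}(T)$. (d) $\mathrm{Uni}(\mathrm{Uni}(T))=\mathrm{Uni}(T)$.
   Context: A Grothendieck topology $T$ on $\mathscr{C}$ assigns to each object $X$ a set of families $(\pi_i:U_i\to X)_{i\in I}$ (''coverings'') such that isomorphisms form singleton coverings, coverings of members of a covering compose to coverings, and coverings pull back (pullbacks existing) along arbitrary morphisms to coverings. It is singleton if all coverings have a one-element index set. A morphism is universal if its pullback along every morphism exists. A morphism $\pi:Y\to X$ is $T$-locally split if there is a covering $(\pi_i:U_i\to X)$ and morphisms $\rho_i:U_i\to Y$ with $\pi\circ\rho_i=\pi_i$. $T_1\prec T_2$ means every universal $T_1$-locally split morphism is $T_2$-locally split; $T_1\sim T_2$ means both $T_1\prec T_2$ and $T_2\prec T_1$. $T_1\subset T_2$ means every $T_1$-covering is a $T_2$-covering. *)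

Set Implicit Arguments.
Unset Strict Implicit.

Record Category := {
  Ob : Type;
  Hom : Ob -> Ob -> Type;
  comp : forall {X Y Z : Ob}, Hom Y Z -> Hom X Y -> Hom X Z;
  idm : forall X : Ob, Hom X X;
  comp_assoc : forall (W X Y Z : Ob) (h : Hom Y Z) (g : Hom X Y) (f : Hom W X),
      comp h (comp g f) = comp (comp h g) f;
  comp_id_l : forall (X Y : Ob) (f : Hom X Y), comp (idm Y) f = f;
  comp_id_r : forall (X Y : Ob) (f : Hom X Y), comp f (idm X) = f
}.

Arguments comp {c X Y Z} _ _.
Arguments idm {c} X.
Arguments Hom c _ _ : clear implicits.
Arguments Ob c : clear implicits.

Section Topologies.
Variable C : Category.

Record Fam (X : Ob C) := {
  idx : Type;
  fdom : idx -> Ob C;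
  farr : forall i : idx, Hom C (fdom i) X
}.
Arguments idx {X} f.
Arguments fdom {X} f i.
Arguments farr {X} f i.

Definition is_iso (X Y : Ob C) (f : Hom C Y X) : Prop :=
  exists g : Hom C X Y, comp f g = idm X /\ comp g f = idm Y.

Definition is_pullback (X Y Z : Ob C) (f : Hom C Y X) (g : Hom C Z X)
    (P : Ob C) (p1 : Hom C P Y) (p2 : Hom C P Z) : Prop :=
  comp f p1 = comp g p2 /\
  forall (Q : Ob C) (q1 : Hom C Q Y) (q2 : Hom C Q Z),
    comp f q1 = comp g q2 ->
    exists! u : Hom C Q P, comp p1 u = q1 /\ comp p2 u = q2.

Definition Coverings := forall X : Ob C, Fam X -> Prop.

Definition single_fam (X Y : Ob C) (f : Hom C Y X) : Fam X :=
  {| idx := unit; fdom := fun _ => Y; farr := fun _ => f |}.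

Definition comp_fam (X : Ob C) (F : Fam X)
    (G : forall i : idx F, Fam (fdom F i)) : Fam X :=
  {| idx := { i : idx F & idx (G i) };
     fdom := fun ij => fdom (G (projT1 ij)) (projT2 ij);
     farr := fun ij => comp (farr F (projT1 ij)) (farr (G (projT1 ij)) (projT2 ij)) |}.

Definition is_GT (T : Coverings) : Prop :=
  (forall (X Y : Ob C) (f : Hom C Y X), is_iso f -> T X (single_fam f)) /\
  (forall (X : Ob C) (F : Fam X) (G : forall i : idx F, Fam (fdom F i)),
      T X F -> (forall i, T (fdom F i) (G i)) -> T X (comp_fam G)) /\
  (forall (X : Ob C) (F : Fam X), T X F ->
     forall (Y : Ob C) (g : Hom C Y X),
       (forall i : idx F, exists (P : Ob C) (p1 : Hom C P (fdom F i)) (p2 : Hom C P Y),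
            is_pullback (farr F i) g p1 p2) /\
       (forall (P : idx F -> Ob C) (p1 : forall i, Hom C (P i) (fdom F i))
               (p2 : forall i, Hom C (P i) Y),
          (forall i, is_pullback (farr F i) g (p1 i) (p2 i)) ->
          T Y {| idx := idx F; fdom := P; farr := p2 |})).

Definition one_element (I : Type) : Prop := exists i0 : I, forall j : I, j = i0.

Definition is_singleton (T : Coverings) : Prop :=
  forall (X : Ob C) (F : Fam X), T X F -> one_element (idx F).

Definition universal (X Y : Ob C) (pi : Hom C Y X) : Prop :=
  forall (Z : Ob C) (g : Hom C Z X),
    exists (P : Ob C) (p1 : Hom C P Y) (p2 : Hom C P Z), is_pullback pi g p1 p2.

Definition locally_split (T : Coverings) (X Y : Ob C) (pi : Hom C Y X) : Prop :=
  exists F : Fam X, T X F /\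
    forall i : idx F, exists rho : Hom C (fdom F i) Y, comp pi rho = farr F i.

Definition prec (T1 T2 : Coverings) : Prop :=
  forall (X Y : Ob C) (pi : Hom C Y X),
    universal pi -> locally_split T1 pi -> locally_split T2 pi.

Definition tequiv (T1 T2 : Coverings) : Prop := prec T1 T2 /\ prec T2 T1.

Definition tsub (T1 T2 : Coverings) : Prop :=
  forall (X : Ob C) (F : Fam X), T1 X F -> T2 X F.

Definition teq (T1 T2 : Coverings) : Prop := tsub T1 T2 /\ tsub T2 T1.

Definition Uni (T : Coverings) : Coverings :=
  fun X F => one_element (idx F) /\
             forall i : idx F, universal (farr F i) /\ locally_split T (farr F i).

End Topologies.

From Stdlib Require Import ClassicalEpsilon ChoiceFacts.
Set Implicit Arguments.
Unset Strict Implicit.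

(** A universal morphism [pi] that is [T]-locally split is already
    [Uni T]-locally split, by the one-element covering [{pi}] split by the
    identity; conversely a [Uni T]-covering [{sigma}] splitting [pi] is itself
    split on a [T]-covering, and composing the two splittings shows [pi] is
    [T]-locally split.  So [Uni T ~ T], and [T1 < T2] says precisely that the
    generators of [Uni T1] are generators of [Uni T2], which gives (b); (d) is
    (b) applied to [Uni T ~ T].  [Uni T] is a topology because universal and
    locally split morphisms are stable under composition and pullback. *)

Lemma dependent_choice : DependentFunctionalChoice.
Proof. exact (non_dep_dep_functional_choice choice). Qed.

Section Pullbacks.
Variable C : Category.

Lemma pullback_paste (X Y Z W : Ob C) (f : Hom C Y X) (g : Hom C Z X) (h : Hom C W Z)
    (P : Ob C) (p1 : Hom C P Y) (p2 : Hom C P Z)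
    (R : Ob C) (r1 : Hom C R Y) (r2 : Hom C R W) :
  is_pullback f g p1 p2 -> is_pullback f (comp g h) r1 r2 ->
  exists u : Hom C R P, is_pullback p2 h u r2.
Proof.
  intros [Pc Pu] [Rc Ru].
  destruct (Pu R r1 (comp h r2)) as (u & [Hu1 Hu2] & _).
  { rewrite Rc; apply eq_sym, comp_assoc. }
  exists u. split; [exact Hu2|].
  intros S a b Hab.
  assert (E : comp f (comp p1 a) = comp (comp g h) b).
  { rewrite comp_assoc, Pc, <- comp_assoc, Hab, comp_assoc. reflexivity. }
  destruct (Ru S (comp p1 a) b E) as (v & [Hv1 Hv2] & Hvu).
  exists v. split; [split|].
  - assert (E2 : comp f (comp p1 a) = comp g (comp p2 a)).
    { rewrite !comp_assoc, Pc. reflexivity. }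
    destruct (Pu S (comp p1 a) (comp p2 a) E2) as (w & _ & Hw).
    transitivity w; [symmetry|]; apply Hw; split; try reflexivity.
    + rewrite comp_assoc, Hu1. exact Hv1.
    + rewrite comp_assoc, Hu2, <- comp_assoc, Hv2. symmetry; exact Hab.
  - exact Hv2.
  - intros v' [H1 H2]. apply Hvu. split; [|exact H2].
    rewrite <- H1, comp_assoc, Hu1. reflexivity.
Qed.

Lemma pullback_comp (X Y Z W : Ob C) (f : Hom C Y X) (g : Hom C Z Y) (h : Hom C W X)
    (P : Ob C) (p1 : Hom C P Y) (p2 : Hom C P W)
    (R : Ob C) (r1 : Hom C R Z) (r2 : Hom C R P) :
  is_pullback f h p1 p2 -> is_pullback g p1 r1 r2 ->
  is_pullback (comp f g) h r1 (comp p2 r2).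
Proof.
  intros [Pc Pu] [Rc Ru]. split.
  { rewrite <- comp_assoc, Rc, !comp_assoc, Pc. reflexivity. }
  intros S a b Hab.
  destruct (Pu S (comp g a) b) as (c & [Hc1 Hc2] & Hcu).
  { rewrite comp_assoc. exact Hab. }
  destruct (Ru S a c) as (d & [Hd1 Hd2] & Hdu).
  { symmetry; exact Hc1. }
  exists d. split; [split|].
  - exact Hd1.
  - rewrite <- comp_assoc, Hd2. exact Hc2.
  - intros d' [H1 H2]. apply Hdu. split; [exact H1|].
    symmetry. apply Hcu. split.
    + rewrite comp_assoc, <- Rc, <- comp_assoc, H1. reflexivity.
    + rewrite comp_assoc. exact H2.
Qed.

Lemma iso_pullback (X Y Z : Ob C) (f : Hom C Y X) (k : Hom C X Y) (h : Hom C Z X) :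
  comp f k = idm X -> comp k f = idm Y -> is_pullback f h (comp k h) (idm Z).
Proof.
  intros Hfk Hkf. split.
  { rewrite comp_assoc, Hfk, comp_id_l, comp_id_r. reflexivity. }
  intros S a b Hab. exists b. split; [split|].
  - rewrite <- comp_assoc, <- Hab, comp_assoc, Hkf, comp_id_l. reflexivity.
  - apply comp_id_l.
  - intros u [_ Hu]. rewrite <- Hu, comp_id_l. reflexivity.
Qed.

Lemma iso_universal (X Y : Ob C) (f : Hom C Y X) : is_iso f -> universal f.
Proof.
  intros [k [Hfk Hkf]] Z h. exists Z, (comp k h), (idm Z).
  exact (iso_pullback h Hfk Hkf).
Qed.

Lemma universal_comp (X Y Z : Ob C) (f : Hom C Y X) (g : Hom C Z Y) :
  universal f -> universal g -> universal (comp f g).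
Proof.
  intros Uf Ug W h.
  destruct (Uf W h) as (P & p1 & p2 & Hp).
  destruct (Ug P p1) as (R & r1 & r2 & Hr).
  exists R, r1, (comp p2 r2). exact (pullback_comp Hp Hr).
Qed.

Lemma universal_pullback (X Y Z : Ob C) (f : Hom C Y X) (g : Hom C Z X)
    (P : Ob C) (p1 : Hom C P Y) (p2 : Hom C P Z) :
  universal f -> is_pullback f g p1 p2 -> universal p2.
Proof.
  intros Uf Hp W h.
  destruct (Uf W (comp g h)) as (R & r1 & r2 & Hr).
  destruct (pullback_paste Hp Hr) as [u Hu].
  exists R, u, r2. exact Hu.
Qed.

End Pullbacks.

Section LocallySplit.
Variables (C : Category) (T : Coverings C).
Arguments T : clear implicits.
Hypothesis HT : is_GT T.

Lemma covering_pullback (X Y : Ob C) (F : Fam X) (g : Hom C Y X) :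
  T X F ->
  exists (P : idx F -> Ob C) (p1 : forall i, Hom C (P i) (fdom i))
         (p2 : forall i, Hom C (P i) Y),
    (forall i, is_pullback (farr i) g (p1 i) (p2 i)) /\
    T Y {| idx := idx F; fdom := P; farr := p2 |}.
Proof.
  intros HF. destruct HT as (_ & _ & Hpb).
  destruct (Hpb X F HF Y g) as [Hex Hcov].
  destruct (dependent_choice
              (B := fun i : idx F => {P : Ob C & (Hom C P (fdom i) * Hom C P Y)%type})
              (R := fun i a => is_pullback (farr i) g (fst (projT2 a)) (snd (projT2 a))))
    as [pb Hpb_i].
  { intro i. destruct (Hex i) as (P & p1 & p2 & Hp). exists (existT _ P (p1, p2)). exact Hp. }
  exists (fun i => projT1 (pb i)), (fun i => fst (projT2 (pb i))),
         (fun i => snd (projT2 (pb i))).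
  split; [exact Hpb_i | apply Hcov with (p1 := fun i => fst (projT2 (pb i))); exact Hpb_i].
Qed.

Lemma covering_arrow_universal (X : Ob C) (F : Fam X) (i : idx F) :
  T X F -> universal (farr i).
Proof.
  intros HF Z g. destruct HT as (_ & _ & Hpb). exact (proj1 (Hpb X F HF Z g) i).
Qed.

Lemma locally_split_base_change (Y Z W : Ob C) (g : Hom C Z Y) (h : Hom C W Y) :
  locally_split T g ->
  exists H : Fam W, T W H /\
    forall l : idx H, exists s : Hom C (fdom l) Z, comp g s = comp h (farr l).
Proof.
  intros [G [HG Hsplit]].
  destruct (covering_pullback h HG) as (P & q1 & q2 & Hq & Hcov).
  exists {| idx := idx G; fdom := P; farr := q2 |}. split; [exact Hcov|].
  intro l. simpl. destruct (Hsplit l) as [sigma Hsigma].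
  exists (comp sigma (q1 l)).
  rewrite comp_assoc, Hsigma. exact (proj1 (Hq l)).
Qed.

Lemma locally_split_pullback (X Y Z : Ob C) (f : Hom C Y X) (g : Hom C Z X)
    (P : Ob C) (p1 : Hom C P Y) (p2 : Hom C P Z) :
  locally_split T f -> is_pullback f g p1 p2 -> locally_split T p2.
Proof.
  intros Lf [_ Pu].
  destruct (locally_split_base_change g Lf) as (H & HH & Hs).
  exists H. split; [exact HH|].
  intro l. destruct (Hs l) as [s Hs_l].
  destruct (Pu _ s (farr l) Hs_l) as (u & [_ Hu] & _).
  exists u. exact Hu.
Qed.

Lemma locally_split_comp (X Y Z : Ob C) (f : Hom C Y X) (g : Hom C Z Y) :
  locally_split T f -> locally_split T g -> locally_split T (comp f g).
Proof.
  intros [F [HF Hsplit]] Lg.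
  destruct (dependent_choice (B := fun k : idx F => Fam (fdom k))
              (R := fun k H => T _ H /\ forall l : idx H, exists s : Hom C (fdom l) Z,
                            comp (comp f g) s = comp (farr k) (farr l)))
    as [H HH].
  { intro k. destruct (Hsplit k) as [rho Hrho].
    destruct (locally_split_base_change rho Lg) as (Hk & HHk & Hs).
    exists Hk. split; [exact HHk|].
    intro l. destruct (Hs l) as [s Hs_l]. exists s.
    rewrite <- comp_assoc, Hs_l, comp_assoc, Hrho. reflexivity. }
  exists (comp_fam H). split.
  - destruct HT as (_ & Hcomp & _). apply Hcomp; [exact HF | intro k; apply HH].
  - intros [k l]. exact (proj2 (HH k) l).
Qed.

End LocallySplit.

Lemma one_element_unit : one_element unit.
Proof. exists tt. intros []. reflexivity. Qed.

Lemma one_element_sigT (I : Type) (J : I -> Type) :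
  one_element I -> (forall i, one_element (J i)) -> one_element {i : I & J i}.
Proof.
  intros [i0 Hi0] HJ. destruct (HJ i0) as [j0 Hj0].
  exists (existT _ i0 j0). intros [i j].
  destruct (eq_sym (Hi0 i)). rewrite (Hj0 j). reflexivity.
Qed.

Lemma locally_split_one_element_covering (C : Category) (T : Coverings C) (X : Ob C) (F : Fam X) (i : idx F) :
  T X F -> one_element (idx F) -> locally_split T (farr i).
Proof.
  intros HF [i0 Hi0]. exists F. split; [exact HF|].
  intro j. rewrite (Hi0 i), (Hi0 j). exists (idm _). apply comp_id_r.
Qed.

Section Uni.
Variables (C : Category) (T : Coverings C).

Lemma Uni_single (X Y : Ob C) (pi : Hom C Y X) :
  universal pi -> locally_split T pi -> Uni T (single_fam pi).
Proof. intros Upi Lpi. split; [exact one_element_unit | intro i; split; assumption]. Qed.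

Lemma Uni_singleton : is_singleton (Uni T).
Proof. intros X F [Hone _]. exact Hone. Qed.

Lemma locally_split_of_Uni (X Y : Ob C) (pi : Hom C Y X) :
  locally_split (Uni T) pi -> locally_split T pi.
Proof.
  intros [F [[[i0 _] HF] Hsplit]].
  destruct (HF i0) as [_ [G [HG HsplitG]]]. destruct (Hsplit i0) as [rho Hrho].
  exists G. split; [exact HG|].
  intro l. destruct (HsplitG l) as [s Hs].
  exists (comp rho s). rewrite comp_assoc, Hrho. exact Hs.
Qed.

Lemma locally_split_Uni (X Y : Ob C) (pi : Hom C Y X) :
  universal pi -> locally_split T pi -> locally_split (Uni T) pi.
Proof.
  intros Upi Lpi.
  exact (locally_split_one_element_covering (F := single_fam pi) tt (Uni_single Upi Lpi) one_element_unit).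
Qed.

Lemma tequiv_Uni : tequiv (Uni T) T.
Proof.
  split; intros X Y pi Upi Lpi.
  - exact (locally_split_of_Uni Lpi).
  - exact (locally_split_Uni Upi Lpi).
Qed.

Lemma is_GT_Uni : is_GT T -> is_GT (Uni T).
Proof.
  intros HT. pose proof HT as (Hiso & _ & _). split; [|split].
  - intros X Y f Hf. apply Uni_single; [exact (iso_universal Hf)|].
    exact (locally_split_one_element_covering (F := single_fam f) tt (Hiso X Y f Hf) one_element_unit).
  - intros X F G [HoneF HF] HG. split.
    + apply one_element_sigT; [exact HoneF | intro i; apply HG].
    + intros [i j]. destruct (HF i) as [Uf Lf]. destruct (proj2 (HG i) j) as [Ug Lg].
      split; [exact (universal_comp Uf Ug) | exact (locally_split_comp HT Lf Lg)].
  - intros X F [HoneF HF] Y g. split.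
    + intro i. exact (proj1 (HF i) Y g).
    + intros P p1 p2 Hp. split; [exact HoneF|].
      intro i. destruct (HF i) as [Uf Lf]. split.
      * exact (universal_pullback Uf (Hp i)).
      * exact (locally_split_pullback HT Lf (Hp i)).
Qed.

Lemma singleton_tsub_Uni : is_GT T -> is_singleton T -> tsub T (Uni T).
Proof.
  intros HT Hsing X F HF. split; [exact (Hsing X F HF)|].
  intro i. split.
  - exact (covering_arrow_universal HT i HF).
  - exact (locally_split_one_element_covering i HF (Hsing X F HF)).
Qed.

End Uni.

Lemma prec_iff_tsub_Uni (C : Category) (T1 T2 : Coverings C) :
  prec T1 T2 <-> tsub (Uni T1) (Uni T2).
Proof.
  split.
  - intros Hprec X F [Hone HF]. split; [exact Hone|].
    intro i. destruct (HF i) as [U L]. split; [exact U | exact (Hprec _ _ _ U L)].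
  - intros Hsub X Y pi U L.
    exact (proj2 (proj2 (Hsub X _ (Uni_single U L)) tt)).
Qed.

Lemma tequiv_iff_teq_Uni (C : Category) (T1 T2 : Coverings C) :
  tequiv T1 T2 <-> teq (Uni T1) (Uni T2).
Proof. unfold tequiv, teq. rewrite !prec_iff_tsub_Uni. reflexivity. Qed.

Lemma Uni_idempotent (C : Category) (T : Coverings C) : teq (Uni (Uni T)) (Uni T).
Proof. apply tequiv_iff_teq_Uni, tequiv_Uni. Qed.

Theorem mainTheorem8 (C : Category) :
  (* (a) *)
  (forall T : Coverings C, is_GT T ->
     (is_GT (Uni T) /\ is_singleton (Uni T)) /\
     tequiv (Uni T) T /\
     (exists T' : Coverings C, is_GT T' /\ is_singleton T' /\ tequiv T T')) /\
  (* (b) *)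
  (forall T1 T2 : Coverings C, is_GT T1 -> is_GT T2 ->
     (prec T1 T2 <-> tsub (Uni T1) (Uni T2)) /\
     (tequiv T1 T2 <-> teq (Uni T1) (Uni T2))) /\
  (* (c) *)
  (forall T : Coverings C, is_GT T -> is_singleton T -> tsub T (Uni T)) /\
  (* (d) *)
  (forall T : Coverings C, is_GT T -> teq (Uni (Uni T)) (Uni T)).
Proof.
  split; [|split; [|split]].
  - intros T HT. pose proof (tequiv_Uni T) as [HUT HTU].
    split; [split; [exact (is_GT_Uni HT) | apply Uni_singleton]|].
    split; [split; assumption|].
    exists (Uni T). split; [exact (is_GT_Uni HT)|].
    split; [apply Uni_singleton | split; assumption].
  - intros T1 T2 _ _. split; [apply prec_iff_tsub_Uni | apply tequiv_iff_teq_Uni].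
  - intros T. apply singleton_tsub_Uni.
  - intros T _. apply Uni_idempotent.
Qed.
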